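(* Let $\epsilon>0$, let $f(\cdot)$ be any function, and let $\mathcal{I}$ be a bin packing input made up solely of large items (items of size at least $\epsilon$). Then any packing of $\mathcal{I}$ into unit bins using at most $(1+\epsilon)\cdot OPT(\mathcal{I})+f(\epsilon^{-1})$ bins has all but at most $2\epsilon\cdot OPT(\mathcal{I})+2f(\epsilon^{-1})+3$ of its bins either containing no large items or being more than half filled by large items (i.e., the total size of large items in the bin exceeds $1/2$).
   Context: $OPT(\mathcal{I})$ denotes the minimum number of unit-capacity bins into which the items of $\mathcal{I}$ can be packed. *)

From HB Require Import structures.
From mathcomp Require Import all_boot all_order all_algebra.
Set Implicit Arguments. Unset Strict Implicit. Unset Printing Implicit Defensive.
Import Order.TTheory GRing.Theory Num.Theory.
Local Open Scope ring_scope.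

(* A bin packing input: n items with sizes s : 'I_n -> R, each in (0,1].
   A packing into m bins is an assignment a : 'I_n -> 'I_m of items to bins. *)

Definition load (R : realFieldType) (n m : nat) (s : 'I_n -> R) (a : 'I_n -> 'I_m)
  (j : 'I_m) : R := \sum_(i < n | a i == j) s i.

Definition large_load (R : realFieldType) (n m : nat) (eps : R) (s : 'I_n -> R)
  (a : 'I_n -> 'I_m) (j : 'I_m) : R := \sum_(i < n | (a i == j) && (eps <= s i)) s i.

Definition valid_packing (R : realFieldType) (n m : nat) (s : 'I_n -> R)
  (a : 'I_n -> 'I_m) : Prop := forall j : 'I_m, load s a j <= 1.

Definition packable (R : realFieldType) (n : nat) (s : 'I_n -> R) (m : nat) : Prop :=
  exists a : 'I_n -> 'I_m, valid_packing s a.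

Definition is_OPT (R : realFieldType) (n : nat) (s : 'I_n -> R) (opt : nat) : Prop :=
  packable s opt /\ forall m, packable s m -> (opt <= m)%N.

Definition used_bins (n m : nat) (a : 'I_n -> 'I_m) : {set 'I_m} :=
  [set j | [exists i, a i == j]].

(* Every item is large, so a bin whose large items fill at most half of it is
   at most half full.  Two such bins can be merged into one, so pairing them up
   saves half of them: OPT + |S|/2 <= #bins <= (1 + eps) OPT + f(1/eps), i.e.
   |S| <= 2 eps OPT + 2 f(1/eps) + 1. *)
From HB Require Import structures.
From mathcomp Require Import all_boot all_order all_algebra.
From mathcomp Require Import zify lra.
Set Implicit Arguments. Unset Strict Implicit. Unset Printing Implicit Defensive.
Import Order.TTheory GRing.Theory Num.Theory.
Local Open Scope ring_scope.

Section Packings.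

Variables (R : realFieldType) (n m : nat) (s : 'I_n -> R).

Lemma mem_used_bins (a : 'I_n -> 'I_m) i : a i \in used_bins a.
Proof. by rewrite inE; apply/existsP; exists i. Qed.

Lemma packable_used_bins (a : 'I_n -> 'I_m) :
  valid_packing s a -> packable s #|used_bins a|.
Proof.
move=> a_valid.
exists (fun i => enum_rank_in (mem_used_bins a i) (a i)) => k.
rewrite /load (eq_bigl (fun i => a i == enum_val k)); first exact: a_valid.
move=> i; apply/eqP/eqP => [<- | ai_k]; last apply: enum_val_inj;
  by rewrite enum_rankK_in ?mem_used_bins.
Qed.

Lemma large_load_all_large eps (a : 'I_n -> 'I_m) j :
  (forall i, eps <= s i) -> large_load eps s a j = load s a j.
Proof. by move=> large; apply: eq_bigl => i; rewrite large andbT. Qed.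

Definition merge_bins (a : 'I_n -> 'I_m) (x y : 'I_m) (i : 'I_n) : 'I_m :=
  if a i == y then x else a i.

Section MergeBins.

Variables (a : 'I_n -> 'I_m) (x y : 'I_m).
Hypothesis neq_xy : x != y.

Lemma load_merge_bins_target : load s (merge_bins a x y) x = load s a x + load s a y.
Proof.
rewrite /load (bigID (fun i => a i == x)) /=.
congr (_ + _); apply: eq_bigl => i; rewrite /merge_bins; case: (eqVneq (a i) y) => [-> | ne_y].
- by rewrite eqxx eq_sym (negbTE neq_xy) andbF.
- by rewrite andbb.
- by rewrite eqxx eq_sym neq_xy.
- by rewrite andbN.
Qed.

Lemma load_merge_bins_source : load s (merge_bins a x y) y = 0.
Proof.
rewrite /load big_pred0 // => i; rewrite /merge_bins.
by case: (eqVneq (a i) y) => [_ | /negbTE //]; exact: negbTE.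
Qed.

Lemma merge_bins_eq j i : j != x -> j != y -> (merge_bins a x y i == j) = (a i == j).
Proof.
move=> ne_jx ne_jy; rewrite /merge_bins; case: (eqVneq (a i) y) => // ->.
by rewrite ![_ == j]eq_sym (negbTE ne_jx) (negbTE ne_jy).
Qed.

Lemma mem_used_bins_merge_bins j :
  j != x -> j != y -> (j \in used_bins (merge_bins a x y)) = (j \in used_bins a).
Proof.
by move=> ne_jx ne_jy; rewrite !inE; apply: eq_existsb => i; rewrite merge_bins_eq.
Qed.

Lemma load_merge_bins j : j != x -> j != y -> load s (merge_bins a x y) j = load s a j.
Proof. by move=> ne_jx ne_jy; apply: eq_bigl => i; rewrite merge_bins_eq. Qed.

Lemma valid_packing_merge_bins :
  valid_packing s a -> load s a x + load s a y <= 1 -> valid_packing s (merge_bins a x y).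
Proof.
move=> a_valid fit j.
case: (eqVneq j x) => [-> | ne_jx]; first by rewrite load_merge_bins_target.
case: (eqVneq j y) => [-> | ne_jy]; first by rewrite load_merge_bins_source ler01.
by rewrite load_merge_bins.
Qed.

Lemma used_bins_merge_bins :
  x \in used_bins a -> used_bins (merge_bins a x y) \subset used_bins a :\ y.
Proof.
move=> x_used; apply/subsetP => j; rewrite inE => /existsP[i /eqP <-].
rewrite !inE /merge_bins; case: (eqVneq (a i) y) => [_ | ne_y].
  by rewrite neq_xy; move: x_used; rewrite inE.
by rewrite ne_y; apply/existsP; exists i.
Qed.

Lemma card_used_bins_merge_bins :
  x \in used_bins a -> y \in used_bins a ->
  (#|used_bins (merge_bins a x y)| < #|used_bins a|)%N.
Proof.
move=> x_used y_used; rewrite (cardsD1 y (used_bins a)) y_used ltnS.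
exact/subset_leq_card/used_bins_merge_bins.
Qed.

End MergeBins.

Lemma merge_half_full_bins (a : 'I_n -> 'I_m) (B : {set 'I_m}) :
  valid_packing s a -> B \subset used_bins a -> {in B, forall j, load s a j <= 1 / 2} ->
  exists2 a' : 'I_n -> 'I_m, valid_packing s a' &
    (#|used_bins a'| + #|B|./2 <= #|used_bins a|)%N.
Proof.
have [k] := ubnP #|B|; elim: k B a => // k IH B a ltBk a_valid B_used B_half.
have [/card_gt1P[x [y [Bx By neq_xy]]] | le_B1] := ltnP 1 #|B|; last first.
  by exists a => //; move: le_B1; case: #|B| => [|[|]] //= _; rewrite addn0.
have used_B j : j \in B -> j \in used_bins a by apply: (subsetP B_used).
pose B' := B :\ x :\ y.
have in_B' j : j \in B' -> [/\ j != x, j != y & j \in B].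
  by rewrite !inE => /and3P[].
have card_B : #|B| = #|B'|.+2.
  by rewrite (cardsD1 x B) Bx (cardsD1 y (B :\ x)) !inE eq_sym neq_xy By.
have ltB'k : (#|B'| < k)%N by move: ltBk; rewrite card_B; lia.
have merged_valid : valid_packing s (merge_bins a x y).
  by apply: valid_packing_merge_bins => //; have := B_half x Bx; have := B_half y By; lra.
have B'_used : B' \subset used_bins (merge_bins a x y).
  apply/subsetP => j /in_B'[ne_jx ne_jy Bj].
  by rewrite mem_used_bins_merge_bins ?used_B.
have B'_half : {in B', forall j, load s (merge_bins a x y) j <= 1 / 2}.
  by move=> j /in_B'[ne_jx ne_jy Bj]; rewrite load_merge_bins ?B_half.
have [a'' a''_valid card_a''] := IH B' _ ltB'k merged_valid B'_used B'_half.
exists a'' => //; rewrite card_B /= addnS.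
exact: leq_ltn_trans card_a'' (card_used_bins_merge_bins neq_xy (used_B x Bx) (used_B y By)).
Qed.

Lemma opt_add_half_le_used_bins opt (a : 'I_n -> 'I_m) (B : {set 'I_m}) :
  is_OPT s opt -> valid_packing s a ->
  B \subset used_bins a -> {in B, forall j, load s a j <= 1 / 2} ->
  (opt + #|B|./2 <= #|used_bins a|)%N.
Proof.
move=> [_ opt_min] a_valid B_used B_half.
have [a' a'_valid card_a'] := merge_half_full_bins a_valid B_used B_half.
exact: leq_trans (leq_add (opt_min _ (packable_used_bins a'_valid)) (leqnn _)) card_a'.
Qed.

End Packings.

Theorem mainTheorem4 (R : realFieldType) (eps : R) (f : R -> R)
    (n : nat) (s : 'I_n -> R) (opt : nat) (m : nat) (a : 'I_n -> 'I_m) :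
  0 < eps ->
  (forall i, 0 < s i <= 1) ->
  (forall i, eps <= s i) ->
  is_OPT s opt ->
  valid_packing s a ->
  (#|used_bins a|%:R <= (1 + eps) * opt%:R + f eps^-1) ->
  #|[set j : 'I_m | [exists i, (a i == j) && (eps <= s i)] &&
                    ~~ (large_load eps s a j > 1 / 2)]|%:R
    <= 2 * eps * opt%:R + 2 * f eps^-1 + 3.
Proof.
move=> _ _ large opt_s a_valid used_le.
set S := [set j | _].
have S_used : S \subset used_bins a.
  by apply/subsetP => j; rewrite inE => /andP[/existsP[i /andP[/eqP <- _]] _];
    exact: mem_used_bins.
have S_half : {in S, forall j, load s a j <= 1 / 2}.
  by move=> j; rewrite inE -(large_load_all_large a j large) -leNgt => /andP[].
have opt_half : opt%:R + (#|S|./2)%:R <= #|used_bins a|%:R :> R.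
  by rewrite -natrD ler_nat (opt_add_half_le_used_bins opt_s a_valid S_used S_half).
have card_half : #|S|%:R <= 2 * (#|S|./2)%:R + 1 :> R.
  by rewrite -natrM natr1 ler_nat -[leqLHS]odd_double_half mul2n addnC -addn1 leq_add2l leq_b1.
lra.
Qed.
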